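(* Let $K$ be a skew field with center $P$ and an involution, $\mathcal C$ a linear category over $P$ with involution, and $A$ a selfadjoint, direct-sum-indecomposable representation of $\mathcal C$ over $K$. Then $A$ is congruent to a representation $B^f$, where $B\in\operatorname{ind}_0(\mathcal C)$ and $f=f^\circ\in\operatorname{Aut}(B)$.
   Context: $K$ has an involution $a\mapsto\bar a$. Linear category over $P$: $P$-vector-space Hom sets, bilinear composition; involution on it: $u\mapsto u^*$, $(\alpha:u\to v)\mapsto(\alpha^*:v^*\to u^* )$, $u^{**}=u\ne u^*$, $\alpha^{**}=\alpha$, $(\alpha\beta)^*=\beta^*\alpha^*$, $(\alpha a)^*=\alpha^*\bar a$. Representations: functors to finite-dimensional right $K$-spaces, finite total dimension, preserving $P$-linear combinations; morphisms: natural transformations. $V^*$: semilinear forms, $A^*\varphi=\varphi A$, $V^{**}=V$. $A^\circ_u=(A_{u^*})^*$, $A^\circ_\alpha=(A_{\alpha^*})^*$, $f^\circ_u=(f_{u^*})^*$. Selfadjoint: $A=A^\circ$; congruence: isomorphism $\varphi$ of selfadjoint representations with $\varphi^\circ=\varphi^{-1}$. Fix a partition of objects into $S_0$, $S_0^*$. For selfadjoint $B$ and automorphism $f=f^\circ$: $\tilde f_v=f_v$, $\tilde f_{v^*}=1$ ($v\in S_0$), $B^f_v=B_v$, $B^f_\alpha=\tilde f_v^{-1}B_\alpha\tilde f_u$ for $\alpha:u\to v$. $\operatorname{ind}_0(\mathcal C)$: from a complete set of pairwise nonisomorphic indecomposable representations, take those isomorphic to a selfadjoint representation, each replaced by a selfadjoint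 representation isomorphic to it. *)

From HB Require Import structures.
From mathcomp Require Import all_boot all_algebra.
Set Implicit Arguments. Unset Strict Implicit. Unset Printing Implicit Defensive.
Import GRing.Theory.
Local Open Scope ring_scope.

Definition skew_field (K : unitRingType) : Prop :=
  (1 : K) != 0 /\ forall x : K, x != 0 -> x \is a GRing.unit.

Definition is_involution (K : unitRingType) (cj : K -> K) : Prop :=
  [/\ forall x y, cj (x + y) = cj x + cj y,
      forall x y, cj (x * y) = cj y * cj x &
      forall x, cj (cj x) = x].

Definition central (K : unitRingType) (a : K) : Prop := forall y : K, a * y = y * a.

(* Scalars of P act on Hom-sets via [hsc]; only central scalars matter:
   every axiom/usage of [hsc] is restricted to central elements. *)
Record LinCatInv (K : unitRingType) := {
  Ob : Type;
  Hom : Ob -> Ob -> zmodType;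
  hsc : forall u v, Hom u v -> K -> Hom u v;
  comp : forall u v w, Hom v w -> Hom u v -> Hom u w;
  idm : forall u, Hom u u;
  ostar : Ob -> Ob;
  mstar : forall u v, Hom u v -> Hom (ostar v) (ostar u)
}.

Arguments Ob {K} l.
Arguments Hom {K} l.
Arguments hsc {K} l {u v}.
Arguments comp {K} l {u v w}.
Arguments idm {K} l u.
Arguments ostar {K} l.
Arguments mstar {K} l {u v}.

Definition is_lincatinv (K : unitRingType) (cj : K -> K) (C : LinCatInv K) : Prop :=
  (forall u v (x y : Hom C u v) a, central a -> hsc C (x + y) a = hsc C x a + hsc C y a) /\
  (forall u v (x : Hom C u v) a b, central a -> central b ->
      hsc C x (a + b) = hsc C x a + hsc C x b) /\
  (forall u v (x : Hom C u v) a b, central a -> central b ->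
      hsc C (hsc C x a) b = hsc C x (a * b)) /\
  (forall u v (x : Hom C u v), hsc C x 1 = x) /\
  (forall u v w z (x : Hom C w z) (y : Hom C v w) (t : Hom C u v),
      comp C x (comp C y t) = comp C (comp C x y) t) /\
  (forall u v (x : Hom C u v), comp C (idm C v) x = x /\ comp C x (idm C u) = x) /\
  (forall u v w (x x' : Hom C v w) (y : Hom C u v), comp C (x + x') y = comp C x y + comp C x' y) /\
  (forall u v w (x : Hom C v w) (y y' : Hom C u v), comp C x (y + y') = comp C x y + comp C x y') /\
  (forall u v w (x : Hom C v w) (y : Hom C u v) a, central a ->
      comp C (hsc C x a) y = hsc C (comp C x y) a /\ comp C x (hsc C y a) = hsc C (comp C x y) a) /\
  (forall u, ostar C (ostar C u) = u) /\
  (forall u, ostar C u <> u) /\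
  (forall u v (x y : Hom C u v), mstar C (x + y) = mstar C x + mstar C y) /\
  (forall u v (x : Hom C u v) a, central a -> mstar C (hsc C x a) = hsc C (mstar C x) (cj a)) /\
  (forall u v w (x : Hom C v w) (y : Hom C u v), mstar C (comp C x y) = comp C (mstar C y) (mstar C x)) /\
  (* alpha^** = alpha (as a dependent equality, since u^** = u only propositionally) *)
  (forall u v (x : Hom C u v),
      existT (fun p : Ob C * Ob C => (Hom C p.1 p.2 : Type))
             (ostar C (ostar C u), ostar C (ostar C v)) (mstar C (mstar C x))
      = existT (fun p : Ob C * Ob C => (Hom C p.1 p.2 : Type)) (u, v) x).

(* ---------- representations (in coordinates: V_u = K^(dim u), columns;
   linear maps K^n -> K^m of right K-spaces = m x n matrices acting on the left) *)
Record rep (K : unitRingType) (C : LinCatInv K) := Rep {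
  rdim : Ob C -> nat;
  rmat : forall u v, Hom C u v -> 'M[K]_(rdim v, rdim u)
}.
Arguments rdim {K C}.
Arguments rmat {K C} r {u v}.

Definition is_rep (K : unitRingType) (C : LinCatInv K) (A : rep C) : Prop :=
  (exists (n : nat) (g : 'I_n -> Ob C), forall u, (0 < rdim A u)%N -> exists i, g i = u) /\
  (forall u v w (x : Hom C v w) (y : Hom C u v), rmat A (comp C x y) = rmat A x *m rmat A y) /\
  (forall u, rmat A (idm C u) = 1%:M) /\
  (forall u v (x y : Hom C u v), rmat A (x + y) = rmat A x + rmat A y) /\
  (forall u v (x : Hom C u v) a, central a -> rmat A (hsc C x a) = rmat A x *m a%:M).

Definition is_morph (K : unitRingType) (C : LinCatInv K) (A B : rep C)
    (f : forall u, 'M[K]_(rdim B u, rdim A u)) : Prop :=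
  forall u v (x : Hom C u v), f v *m rmat A x = rmat B x *m f u.

Arguments is_morph {K C} A B f.

Definition are_inverse (K : unitRingType) (C : LinCatInv K) (A B : rep C)
    (f : forall u, 'M[K]_(rdim B u, rdim A u)) (g : forall u, 'M[K]_(rdim A u, rdim B u)) : Prop :=
  forall u, f u *m g u = 1%:M /\ g u *m f u = 1%:M.

Arguments are_inverse {K C A B} f g.

Definition iso (K : unitRingType) (C : LinCatInv K) (A B : rep C) : Prop :=
  exists f g, is_morph A B f /\ are_inverse f g.

Arguments iso {K C} A B.

Definition dsum (K : unitRingType) (C : LinCatInv K) (A B : rep C) : rep C :=
  @Rep K C (fun u => (rdim A u + rdim B u)%N)
    (fun u v x => block_mx (rmat A x) 0 0 (rmat B x)).

Arguments dsum {K C} A B.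

Definition nonzero (K : unitRingType) (C : LinCatInv K) (A : rep C) : Prop :=
  exists u, (0 < rdim A u)%N.

Arguments nonzero {K C} A.

Definition indecomposable (K : unitRingType) (C : LinCatInv K) (A : rep C) : Prop :=
  is_rep A /\ nonzero A /\
  forall B1 B2 : rep C, is_rep B1 -> is_rep B2 -> nonzero B1 -> nonzero B2 ->
    ~ iso A (dsum B1 B2).

Arguments indecomposable {K C} A.
Arguments is_rep {K C} A.

(* ---------- duality: the dual of a matrix is its conjugate transpose ---------- *)
Definition adj (K : unitRingType) (cj : K -> K) m n (M : 'M[K]_(m, n)) : 'M[K]_(n, m) :=
  \matrix_(i, j) cj (M j i).

Definition mget (K : unitRingType) m n (M : 'M[K]_(m, n)) (i j : nat) : K :=
  match (insub i : option 'I_m), (insub j : option 'I_n) with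
  | Some i', Some j' => M i' j'
  | _, _ => 0
  end.

Definition mxeq (K : unitRingType) m n m' n' (M : 'M[K]_(m, n)) (N : 'M[K]_(m', n')) : Prop :=
  m = m' /\ n = n' /\ forall i j : nat, mget M i j = mget N i j.

Definition selfadjoint (K : unitRingType) (cj : K -> K) (C : LinCatInv K) (A : rep C) : Prop :=
  (forall u, rdim A (ostar C u) = rdim A u) /\
  (forall u v (x : Hom C u v), mxeq (rmat A x) (adj cj (rmat A (mstar C x)))).

Definition congruent (K : unitRingType) (cj : K -> K) (C : LinCatInv K) (A B : rep C) : Prop :=
  selfadjoint cj A /\ selfadjoint cj B /\
  exists (phi : forall u, 'M[K]_(rdim B u, rdim A u)) (psi : forall u, 'M[K]_(rdim A u, rdim B u)),
    is_morph A B phi /\ are_inverse phi psi /\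
    forall u, mxeq (adj cj (phi (ostar C u))) (psi u).

Definition selfadj_aut (K : unitRingType) (cj : K -> K) (C : LinCatInv K) (B : rep C)
    (f g : forall u, 'M[K]_(rdim B u, rdim B u)) : Prop :=
  is_morph B B f /\ are_inverse f g /\
  forall u, mxeq (adj cj (f (ostar C u))) (f u).

Definition S0_partition (K : unitRingType) (C : LinCatInv K) (S0 : Ob C -> bool) : Prop :=
  forall u, S0 (ostar C u) = ~~ S0 u.

(* B^f, where g = f^{-1}:  f~_v = f_v, f~_{v*} = 1 for v in S0 *)
Definition twist (K : unitRingType) (C : LinCatInv K) (S0 : Ob C -> bool) (B : rep C)
    (f g : forall u, 'M[K]_(rdim B u, rdim B u)) : rep C :=
  @Rep K C (rdim B)
    (fun u v x => (if S0 v then g v else 1%:M) *m rmat B x *m (if S0 u then f u else 1%:M)).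

(* ind_0(C): obtained from a complete set of pairwise nonisomorphic indecomposables by
   keeping those isomorphic to a selfadjoint rep, each replaced by a selfadjoint one. *)
Definition is_ind0 (K : unitRingType) (cj : K -> K) (C : LinCatInv K) (ind0 : rep C -> Prop) : Prop :=
  (forall B, ind0 B -> indecomposable B /\ selfadjoint cj B) /\
  (forall B1 B2, ind0 B1 -> ind0 B2 -> iso B1 B2 -> B1 = B2) /\
  (forall A, indecomposable A -> (exists S, is_rep S /\ selfadjoint cj S /\ iso A S) ->
     exists B, ind0 B /\ iso A B).

Arguments selfadjoint {K} cj {C} A.
Arguments congruent {K} cj {C} A B.
Arguments selfadj_aut {K} cj {C} B f g.
Arguments S0_partition {K C} S0.
Arguments twist {K C} S0 B f g.
Arguments is_ind0 {K} cj {C} ind0.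
Arguments adj {K} cj {m n} M.
Arguments mxeq {K m n m' n'} M N.

(* Let [phi : A -> B] be an isomorphism onto the selfadjoint representative [B] of
   ind_0.  Its adjoint [phi^o] is again a morphism [B -> A], so [f := phi phi^o] is an
   automorphism of [B] with [f = f^o], and [B^f] is [B] conjugated by the family
   [f~] that is [f] on S0 and 1 elsewhere.  The isomorphism
   [chi := f~^-1 phi : A -> B^f] is a congruence: for [u] in S0 the identity
   [chi^o_u = chi_u^-1] reads [phi^o_u = phi_u^-1 f_u], which is the definition of
   [f]; for [u] in S0^* it is the adjoint of the same identity at [u^*]. *)
From Pilot Require Import Defs.
From HB Require Import structures.
From mathcomp Require Import all_boot all_algebra.
Set Implicit Arguments. Unset Strict Implicit. Unset Printing Implicit Defensive.
Import GRing.Theory.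
Local Open Scope ring_scope.

Section Involution.
Variables (K : unitRingType) (cj : K -> K).
Hypothesis hcj : is_involution cj.

Lemma involution0 : cj 0 = 0.
Proof.
have [cjD _ _] := hcj; have := cjD 0 0; rewrite addr0.
by move/(congr1 (fun z => z - cj 0)); rewrite addrK subrr.
Qed.

Lemma involution1 : cj 1 = 1.
Proof.
have [_ cjM cjK] := hcj; have := cjM (cj 1) 1.
by rewrite mulr1 cjK mulr1 => <-.
Qed.

Lemma adjmx_mul m n p (M : 'M[K]_(m, n)) (N : 'M[K]_(n, p)) :
  adj cj (M *m N) = adj cj N *m adj cj M.
Proof.
have [cjD cjM _] := hcj; apply/matrixP => i j; rewrite !mxE.
rewrite (big_morph cj cjD involution0); apply: eq_bigr => k _.
by rewrite cjM !mxE.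
Qed.

Lemma adjmxK m n (M : 'M[K]_(m, n)) : adj cj (adj cj M) = M.
Proof. by have [_ _ cjK] := hcj; apply/matrixP => i j; rewrite !mxE cjK. Qed.

Lemma adjmx1 n : adj cj (1%:M : 'M[K]_n) = 1%:M.
Proof.
apply/matrixP => i j; rewrite !mxE eq_sym.
by case: (i == j); rewrite /= ?involution1 ?involution0.
Qed.

End Involution.

Section HeterogeneousEquality.
Variable K : unitRingType.

Lemma mgetE m n (M : 'M[K]_(m, n)) (i : 'I_m) (j : 'I_n) : mget M i j = M i j.
Proof. by rewrite /mget !valK. Qed.

Lemma mxeq_eq m n (M N : 'M[K]_(m, n)) : mxeq M N -> M = N.
Proof. by move=> [_ [_ eqMN]]; apply/matrixP => i j; have := eqMN i j; rewrite !mgetE. Qed.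

Lemma mxeq_sym m n m' n' (M : 'M[K]_(m, n)) (N : 'M[K]_(m', n')) :
  mxeq M N -> mxeq N M.
Proof. by move=> [em [en eqMN]]; subst m' n'; split; [|split] => // i j; rewrite eqMN. Qed.

Lemma mxeq_trans m n m' n' m'' n'' (M : 'M[K]_(m, n)) (N : 'M[K]_(m', n'))
    (P : 'M[K]_(m'', n'')) :
  mxeq M N -> mxeq N P -> mxeq M P.
Proof.
move=> [em [en eqMN]] [em' [en' eqNP]]; subst m' n' m'' n''.
by split; [|split] => // i j; rewrite eqMN.
Qed.

Lemma mxeq_mul m n p m' n' p' (M : 'M[K]_(m, n)) (N : 'M[K]_(n, p))
    (M' : 'M[K]_(m', n')) (N' : 'M[K]_(n', p')) :
  mxeq M M' -> mxeq N N' -> mxeq (M *m N) (M' *m N').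
Proof.
move=> eqM eqN; have [em [en _]] := eqM; have [_ [ep _]] := eqN.
by subst m' n' p'; rewrite (mxeq_eq eqM) (mxeq_eq eqN).
Qed.

Lemma mxeq_adj (cj : K -> K) m n m' n' (M : 'M[K]_(m, n)) (N : 'M[K]_(m', n')) :
  mxeq M N -> mxeq (adj cj M) (adj cj N).
Proof. by move=> eqMN; have [em [en _]] := eqMN; subst m' n'; rewrite (mxeq_eq eqMN). Qed.

Lemma mxeq_congr (T : Type) (d1 d2 : T -> nat) (F : forall w, 'M[K]_(d1 w, d2 w)) w w' :
  w = w' -> mxeq (F w) (F w').
Proof. by move=> ->. Qed.

Lemma mxeq1 n n' : n = n' -> mxeq (1%:M : 'M[K]_n) (1%:M : 'M[K]_n').
Proof. by move=> ->. Qed.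

(* Transports a matrix along equalities of dimensions (out-of-range entries read 0). *)
Definition mxreshape m' n' m n (M : 'M[K]_(m, n)) : 'M[K]_(m', n') :=
  \matrix_(i, j) mget M i j.

Lemma mxreshapeE m' n' m n (M : 'M[K]_(m, n)) :
  m = m' -> n = n' -> mxeq (mxreshape m' n' M) M.
Proof.
move=> em en; subst m' n'; have -> // : mxreshape m n M = M.
by apply/matrixP => i j; rewrite mxE mgetE.
Qed.

End HeterogeneousEquality.

Lemma iso_refl (K : unitRingType) (C : LinCatInv K) (A : rep C) : iso A A.
Proof.
exists (fun u => 1%:M), (fun u => 1%:M); split => [u v x|u].
  by rewrite mul1mx mulmx1.
by rewrite mulmx1.
Qed.

Section Duality.
Variables (K : unitRingType) (cj : K -> K) (C : LinCatInv K).
Hypothesis hcj : is_involution cj.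
Hypothesis ostarK : forall u, ostar C (ostar C u) = u.

Definition dual (A B : rep C) (phi : forall u, 'M[K]_(rdim B u, rdim A u)) u :
    'M[K]_(rdim A u, rdim B u) :=
  mxreshape (rdim A u) (rdim B u) (adj cj (phi (ostar C u))).

Lemma dualE (A B : rep C) (phi : forall u, 'M[K]_(rdim B u, rdim A u)) u :
  selfadjoint cj A -> selfadjoint cj B -> mxeq (dual phi u) (adj cj (phi (ostar C u))).
Proof. by move=> hA hB; apply: mxreshapeE; rewrite ?hA.1 ?hB.1. Qed.

Variables A B : rep C.
Hypotheses (hA : selfadjoint cj A) (hB : selfadjoint cj B).

Lemma adj_dual (phi : forall u, 'M[K]_(rdim B u, rdim A u)) u :
  mxeq (adj cj (dual phi (ostar C u))) (phi u).
Proof.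
apply: mxeq_trans (mxeq_adj cj (dualE phi (ostar C u) hA hB)) _.
rewrite adjmxK //; exact: mxeq_congr.
Qed.

Lemma dual_morph phi : is_morph A B phi -> is_morph B A (dual phi).
Proof.
move=> mphi u v x; apply: mxeq_eq.
apply: mxeq_trans (mxeq_mul (dualE phi v hA hB) (hB.2 u v x)) _.
rewrite -adjmx_mul // -mphi adjmx_mul //.
exact: mxeq_mul (mxeq_sym (hA.2 u v x)) (mxeq_sym (dualE phi u hA hB)).
Qed.

Lemma dual_inverse phi psi : are_inverse phi psi -> are_inverse (dual phi) (@dual B A psi).
Proof.
move=> phiK u; split; apply: mxeq_eq.
- apply: mxeq_trans (mxeq_mul (dualE phi u hA hB) (dualE psi u hB hA)) _.
  by rewrite -adjmx_mul // (phiK (ostar C u)).2 adjmx1 //; apply/mxeq1/hA.1.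
- apply: mxeq_trans (mxeq_mul (dualE psi u hB hA) (dualE phi u hA hB)) _.
  by rewrite -adjmx_mul // (phiK (ostar C u)).1 adjmx1 //; apply/mxeq1/hB.1.
Qed.

Lemma selfadj_aut_mul_dual phi psi :
  is_morph A B phi -> are_inverse phi psi ->
  selfadj_aut cj B (fun u => phi u *m dual phi u) (fun u => @dual B A psi u *m psi u).
Proof.
move=> mphi phiK; have dphiK := dual_inverse phiK.
split; [|split] => [u v x|u|u].
- by rewrite -mulmxA (dual_morph mphi) !mulmxA mphi.
- split.
    by rewrite mulmxA -(mulmxA (phi u)) (dphiK u).1 mulmx1 (phiK u).1.
  by rewrite mulmxA -(mulmxA (dual psi u)) (phiK u).2 mulmx1 (dphiK u).2.
- rewrite adjmx_mul //; apply: mxeq_mul (adj_dual phi u) _.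
  exact: mxeq_sym (dualE phi u hA hB).
Qed.

End Duality.

Section Congruence.
Variables (K : unitRingType) (cj : K -> K) (C : LinCatInv K).
Hypothesis hcj : is_involution cj.
Hypothesis ostarK : forall u, ostar C (ostar C u) = u.

Lemma congruent_of_iso (A T : rep C) chi chii :
  selfadjoint cj A -> is_morph A T chi -> are_inverse chi chii ->
  (forall u, mxeq (adj cj (chi (ostar C u))) (chii u)) ->
  congruent cj A T.
Proof.
move=> hA mchi chiK chiO.
have rmatT u v (x : Defs.Hom C u v) : rmat T x = chi v *m rmat A x *m chii u.
  by rewrite mchi -mulmxA (chiK u).1 mulmx1.
have adj_chii v : mxeq (adj cj (chii (ostar C v))) (chi v).
  apply: mxeq_trans (mxeq_sym (mxeq_adj cj (chiO (ostar C v)))) _.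
  rewrite adjmxK //; exact: mxeq_congr.
split => //; split; last by exists chi, chii.
split=> [u|u v x]; first by have [_ [eT _]] := chiO u.
rewrite !rmatT !adjmx_mul // mulmxA.
apply: mxeq_mul; first apply: mxeq_mul.
- exact: mxeq_sym (adj_chii v).
- exact: hA.2.
- exact: mxeq_sym (chiO u).
Qed.

Variable S0 : Ob C -> bool.
Hypothesis hS0 : S0_partition S0.

Definition twist_fam (B : rep C) (f : forall u, 'M[K]_(rdim B u, rdim B u)) u :
    'M[K]_(rdim B u, rdim B u) :=
  if S0 u then f u else 1%:M.

Lemma twist_famK (B : rep C) f g u :
  f u *m g u = 1%:M -> @twist_fam B f u *m twist_fam g u = 1%:M.
Proof. by rewrite /twist_fam; case: (S0 u); rewrite ?mulmx1. Qed.

Lemma congruent_twist (A B : rep C) phi psi :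
  selfadjoint cj A -> selfadjoint cj B -> is_morph A B phi -> are_inverse phi psi ->
  congruent cj A
    (twist S0 B (fun u => phi u *m dual cj phi u) (fun u => @dual _ cj _ B A psi u *m psi u)).
Proof.
move=> hA hB mphi phiK.
pose f u := phi u *m dual cj phi u; pose g u := @dual _ cj _ B A psi u *m psi u.
have [_ [fgK _]] := selfadj_aut_mul_dual hcj ostarK hA hB mphi phiK.
have FG u : twist_fam f u *m twist_fam g u = 1%:M by apply: twist_famK; case: (fgK u).
have GF u : twist_fam g u *m twist_fam f u = 1%:M by apply: twist_famK; case: (fgK u).
apply: (@congruent_of_iso _ (twist S0 B f g) (fun u => twist_fam g u *m phi u)
                                               (fun u => psi u *m twist_fam f u)) => //.
- move=> u v x /=; rewrite -!mulmxA mphi; congr (_ *m _).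
  by rewrite !mulmxA -(mulmxA _ (twist_fam f u)) FG mulmx1.
- move=> u; split.
    by rewrite mulmxA -(mulmxA (twist_fam g u)) (phiK u).1 mulmx1 GF.
  by rewrite mulmxA -(mulmxA (psi u)) FG mulmx1 (phiK u).2.
- move=> u; rewrite /twist_fam hS0 /f /g; case: (S0 u) => /=.
    rewrite mul1mx mulmxA (phiK u).2 mul1mx; exact: mxeq_sym (dualE phi u hA hB).
  rewrite mulmx1 -mulmxA (phiK (ostar C u)).2 mulmx1.
  exact: adj_dual.
Qed.

End Congruence.

Theorem lemma4 (K : unitRingType) (cj : K -> K) (C : LinCatInv K)
    (S0 : Ob C -> bool) (ind0 : rep C -> Prop) (A : rep C) :
  skew_field K -> is_involution cj -> is_lincatinv cj C ->
  S0_partition S0 -> is_ind0 cj ind0 ->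
  selfadjoint cj A -> indecomposable A ->
  exists (B : rep C) (f g : forall u, 'M[K]_(rdim B u, rdim B u)),
    ind0 B /\ selfadj_aut cj B f g /\ congruent cj A (twist S0 B f g).
Proof.
move=> _ hcj hC hS0 [ind0_sa [_ ind0_complete]] hA indA.
have ostarK : forall u, ostar C (ostar C u) = u := hC.2.2.2.2.2.2.2.2.2.1.
have [B [ind0B [phi [psi [mphi phiK]]]]] : exists B, ind0 B /\ iso A B.
  by apply: ind0_complete => //; exists A; split; [exact: indA.1 | split; last exact: iso_refl].
have hB := (ind0_sa B ind0B).2.
exists B, (fun u => phi u *m dual cj phi u), (fun u => @dual _ cj _ B A psi u *m psi u).
split; [|split].
- exact: ind0B.
- exact: selfadj_aut_mul_dual.
- exact: congruent_twist.
Qed.
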